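(* Let $1\le d<n$ be integers and $A\subseteq\mathbb{F}_2^n$. For a uniformly random $d$-flat $F$ in $\mathbb{F}_2^n$, \[\Pr\big[|A\cap F|\text{ is odd}\big]\le \frac12+\frac{1}{2(2^{n-d+1}-1)}.\]
   Context: A $d$-flat in $\mathbb{F}_2^n$ is a set $x_0+U$ with $x_0\in\mathbb{F}_2^n$ and $U$ a $d$-dimensional linear subspace of $\mathbb{F}_2^n$; ''uniformly random $d$-flat'' means uniform over the set of all such distinct sets. *)

From HB Require Import structures.
From mathcomp Require Import all_boot all_order all_algebra.
Unset Printing Implicit Defensive.
Import Order.TTheory GRing.Theory Num.Theory.

Notation F2n n := 'rV['F_2]_n.

(* S is a d-flat: S = x0 + U where U is the row space of a d x n matrix of
   rank d, i.e. a d-dimensional linear subspace of F_2^n. *)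
Definition is_flat (n d : nat) (S : {set F2n n}) : bool :=
  [exists x0 : F2n n, exists B : 'M['F_2]_(d, n),
     (\rank B == d) && (S == [set (x0 + u)%R | u in [pred v : F2n n | (v <= B)%MS]])].

Definition flats (n d : nat) : {set {set F2n n}} := [set S | is_flat n d S].

Definition prob_odd (n d : nat) (A : {set F2n n}) : rat :=
  (#|[set S in flats n d | odd #|A :&: S|]|%:R / #|flats n d|%:R)%R.

From mathcomp Require Import all_boot all_order all_algebra.
From mathcomp Require Import zify ring.
Import Order.TTheory GRing.Theory Num.Theory.

(* Write a d-flat as x + rowspace(B) with B a full-rank d x n matrix: every flat
   has the same number of such parametrisations (x, B), so the probability can be
   computed over the pairs (x, B) instead.  Split B into its first row v and the
   remaining (d-1) x n block W.  The flat of (x, B) is then the disjoint union of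
   the (d-1)-flats of (x, W) and (x + v, W), so |A ∩ F| is odd iff the parities
   g(x) and g(x + v) of A on these two flats differ.  For each W, at most half of
   all pairs (x, y) have g(x) <> g(y), whereas v ranges over the 2^n - 2^(d-1)
   vectors outside rowspace(W); the probability is therefore at most
   2^n / (2 (2^n - 2^(d-1))) = 1/2 + 1/(2 (2^(n-d+1) - 1)). *)

Local Open Scope ring_scope.

Lemma card_set_sumb (T : finType) (P : pred T) : #|[set t | P t]| = (\sum_t P t)%N.
Proof.
by rewrite -sum1_card big_mkcond /=; apply: eq_bigr => t _; rewrite inE; case: (P t).
Qed.

Lemma card_constant_fibers {T U : finType} {D : {set T}} {f : T -> U} {c : nat} (P : pred U) :
  (forall t, t \in D -> #|[set s in D | f s == f t]| = c) ->
  #|[set t in D | P (f t)]| = (c * #|[set S in f @: D | P S]|)%N.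
Proof.
move=> fibD; rewrite -!sum1_card.
rewrite (partition_big f [in [set S in f @: D | P S]]) => [|t]; last first.
  by rewrite !inE => /andP[tD Pft]; rewrite Pft imset_f.
rewrite big_distrr /=; apply: eq_bigr => _ /[!inE] /andP[/imsetP[t tD ->] Pft].
rewrite muln1 -(fibD t tD) -sum1_card; apply: eq_bigl => s; rewrite !inE.
by case: (s \in D) => //=; case: eqP => [->|]; rewrite ?Pft ?andbF.
Qed.

Lemma ratio_constant_fibers (R : numFieldType) {T U : finType} {D : {set T}}
    {f : T -> U} {c : nat} (P : pred U) :
  (forall t, t \in D -> #|[set s in D | f s == f t]| = c) ->
  #|[set S in f @: D | P S]|%:R / #|f @: D|%:R
  = #|[set t in D | P (f t)]|%:R / #|D|%:R :> R.
Proof.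
move=> fibD; have [->|[t tD]] := set_0Vmem D.
  by rewrite imset0 !cards0 !invr0 !mulr0.
have c_neq0 : c%:R != 0 :> R.
  rewrite pnatr_eq0 -(fibD t tD) cards_eq0; apply/set0Pn.
  by exists t; rewrite !inE tD eqxx.
have cardD : #|D| = (c * #|f @: D|)%N.
  have DT : [set t in D | predT (f t)] = D by apply/setP => s; rewrite !inE andbT.
  have fDT : [set S in f @: D | predT S] = f @: D by apply/setP => S; rewrite !inE andbT.
  by have := card_constant_fibers predT fibD; rewrite DT fDT.
by rewrite (card_constant_fibers _ fibD) cardD !natrM -mulf_div divff // mul1r.
Qed.

Lemma sum_neq_pairs_le {T : finType} (h : T -> bool) :
  (2 * \sum_x \sum_y (h x != h y) <= #|T| ^ 2)%N.
Proof.
set a := #|[set y | h y]|; set b := #|[set y | ~~ h y]|.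
have sum_y x : (\sum_y (h x != h y) = h x * b + ~~ h x * a)%N.
  rewrite -card_set_sumb /a /b.
  case: (h x); rewrite /= ?mul1n ?mul0n ?addn0;
  by apply: eq_card => y; rewrite !inE; case: (h y).
have cardT : (a + b)%N = #|T|.
  by rewrite -(cardsC [set y | h y]); congr (_ + _); apply: eq_card => y; rewrite !inE.
rewrite (eq_bigr _ (fun x _ => sum_y x)) big_split /= -!big_distrl /=.
rewrite -!card_set_sumb -/a -/b.
rewrite -cardT [(b * a)%N]mulnC mulnDr -mulnDl.
by case: (nat_AGM2 a b); rewrite expnS expn1.
Qed.

Lemma big_col_mx (R : Type) (idx : R) (op : Monoid.com_law idx) (T : finType) d n
    (G : 'M[T]_(1 + d, n) -> R) :
  \big[op/idx]_B G B
  = \big[op/idx]_(v : 'rV[T]_n) \big[op/idx]_(W : 'M[T]_(d, n)) G (col_mx v W).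
Proof.
rewrite pair_bigA (reindex (fun p => col_mx p.1 p.2)) //=.
exists (fun B => (usubmx B, dsubmx B)) => [[v W] _|B _] /=.
  by rewrite col_mxKu col_mxKd.
by rewrite vsubmxK.
Qed.

Section RowSpaces.

Context {F : fieldType}.

Lemma submxDr {m n} {B : 'M[F]_(m, n)} (w : 'rV[F]_n) {u : 'rV[F]_n} :
  (u <= B)%MS -> ((w + u)%R <= B)%MS = (w <= B)%MS.
Proof.
move=> uB; apply/idP/idP => [wuB|wB]; last exact: addmx_sub.
by rewrite -(addrK u w) addmx_sub // eqmx_opp.
Qed.

Lemma rank_col_mx_rV d n (v : 'rV[F]_n) (W : 'M[F]_(d, n)) :
  (\rank (col_mx v W) == d.+1) = (\rank W == d) && ~~ (v <= W)%MS.
Proof.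
rewrite -addsmxE; have := mxrank_sum_cap v W.
have [vW|vNW] := boolP (v <= W)%MS.
  rewrite andbF (addsmx_idPr vW) => _.
  by apply/negbTE; rewrite neq_ltn ltnS rank_leq_row.
have v_neq0 : v != 0 by apply: contraNneq vNW => ->; rewrite sub0mx.
have : (\rank (v :&: W)%MS < \rank v)%N.
  by rewrite (ltn_leqif (mxrank_leqif_sup (capmxSl v W))) sub_capmx (negbTE vNW) andbF.
rewrite rank_rV v_neq0 ltnS leqn0 => /eqP ->.
by rewrite addn0 add1n andbT => ->.
Qed.

End RowSpaces.

Section AffineFlats.

Context {F : finFieldType}.

Lemma card_rV n : #|{: 'rV[F]_n}| = (#|F| ^ n)%N.
Proof. by rewrite card_mx mul1n. Qed.

Lemma card_submx_rV m n (W : 'M[F]_(m, n)) :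
  #|[set v : 'rV[F]_n | (v <= W)%MS]| = (#|F| ^ \rank W)%N.
Proof.
have -> : [set v : 'rV[F]_n | (v <= W)%MS] = [set u *m row_base W | u in 'rV_(\rank W)].
  apply/setP => v; rewrite inE -(eq_row_base W).
  by apply/submxP/imsetP => [[u ->]|[u _ ->]]; exists u.
by rewrite card_imset ?card_rV //; apply/row_free_inj/row_base_free.
Qed.

Lemma card_full_rank_succ d n :
  #|[set B : 'M[F]_(1 + d, n) | \rank B == d.+1]|
  = (#|[set W : 'M[F]_(d, n) | \rank W == d]| * (#|F| ^ n - #|F| ^ d))%N.
Proof.
rewrite !card_set_sumb big_col_mx exchange_big big_distrl /=; apply: eq_bigr => W _.
under eq_bigr do rewrite rank_col_mx_rV.
have [rW|_] /= := boolP (\rank W == d); last by rewrite mul0n big1.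
have -> : (#|F| ^ d)%N = #|[set v : 'rV[F]_n | (v <= W)%MS]|.
  by rewrite card_submx_rV (eqP rW).
rewrite mul1n -card_set_sumb -card_rV.
rewrite -(cardsC [set v : 'rV[F]_n | (v <= W)%MS]) addKn.
by apply: eq_card => v; rewrite !inE.
Qed.

Definition mxflat {n d} (x0 : 'rV[F]_n) (B : 'M[F]_(d, n)) : {set 'rV[F]_n} :=
  [set x0 + u | u in [pred v : 'rV[F]_n | (v <= B)%MS]].

Lemma mem_mxflat n d (x0 : 'rV[F]_n) (B : 'M[F]_(d, n)) (y : 'rV[F]_n) :
  (y \in mxflat x0 B) = ((y - x0)%R <= B)%MS.
Proof.
apply/imsetP/idP => [[u uB ->]|yB]; first by rewrite addrC addKr.
by exists (y - x0); rewrite // addrC subrK.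
Qed.

Lemma card_mxflat n d (x0 : 'rV[F]_n) (B : 'M[F]_(d, n)) :
  #|mxflat x0 B| = (#|F| ^ \rank B)%N.
Proof.
rewrite card_imset; last exact: addrI.
by rewrite -card_submx_rV; apply: eq_card => v; rewrite [RHS]in_set.
Qed.

Lemma eq_mxflat n d (x x0 : 'rV[F]_n) (B B0 : 'M[F]_(d, n)) :
  (mxflat x B == mxflat x0 B0) = ((x - x0)%R <= B0)%MS && (B == B0)%MS.
Proof.
apply/eqP/andP => [eqB|[xB0 /eqmxP eqB]]; last first.
  apply/setP => y; rewrite !mem_mxflat eqB.
  have -> : y - x0 = (y - x) + (x - x0) by rewrite addrA subrK.
  by rewrite (submxDr _ xB0).
have xB0 : ((x - x0)%R <= B0)%MS by rewrite -mem_mxflat -eqB mem_mxflat subrr sub0mx.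
have x0B : ((x0 - x)%R <= B)%MS by rewrite -mem_mxflat eqB mem_mxflat subrr sub0mx.
split=> //; apply/andP; split; apply/row_subP => i.
  have : x + row i B \in mxflat x0 B0 by rewrite -eqB mem_mxflat addrC addKr row_sub.
  by rewrite mem_mxflat addrAC addrC submxDr.
have : x0 + row i B0 \in mxflat x B by rewrite eqB mem_mxflat addrC addKr row_sub.
by rewrite mem_mxflat addrAC addrC submxDr.
Qed.

Lemma card_eqmx_row_free d n (B0 : 'M[F]_(d, n)) : row_free B0 ->
  #|[set B : 'M[F]_(d, n) | (B == B0)%MS]| = #|[set P : 'M[F]_d | P \in unitmx]|.
Proof.
move=> freeB0; have rB0 : \rank B0 = d by apply/eqP.
have -> : [set B : 'M[F]_(d, n) | (B == B0)%MS] = [set P *m B0 | P in [set P | P \in unitmx]].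
  apply/setP => B; rewrite inE; apply/idP/imsetP => [eqB|[P]]; last first.
    by rewrite inE -row_full_unit => fullP ->; apply/eqmxP/eqmxMfull.
  have sBB0 : (B <= B0)%MS by case/andP: eqB.
  exists (B *m pinvmx B0); last by rewrite mulmxKpV.
  rewrite inE -row_full_unit /row_full eqn_leq rank_leq_col /= -{1}rB0.
  rewrite -(eqmx_rank eqB); apply: leq_trans (mxrankM_maxl _ B0).
  by rewrite mulmxKpV.
by rewrite card_imset //; apply: row_free_inj.
Qed.

Lemma disjoint_mxflat {d n} (x : 'rV[F]_n) {v : 'rV[F]_n} {W : 'M[F]_(d, n)} :
  ~~ (v <= W)%MS -> [disjoint mxflat x W & mxflat (x + v) W].
Proof.
move=> vNW; apply/pred0P => y /=; rewrite !mem_mxflat.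
apply/negbTE; apply: contra vNW => /andP[yx yxv].
rewrite -(submxDr v yxv) (_ : v + _ = y - x) //.
by rewrite addrC opprD addrA subrK.
Qed.

Definition flat_params n d : {set 'rV[F]_n * 'M[F]_(d, n)} :=
  setX [set: 'rV[F]_n] [set B : 'M[F]_(d, n) | \rank B == d].

Lemma card_mxflat_fiber n d (x0 : 'rV[F]_n) (B0 : 'M[F]_(d, n)) : row_free B0 ->
  #|[set t in flat_params n d | mxflat t.1 t.2 == mxflat x0 B0]|
  = (#|F| ^ d * #|[set P : 'M[F]_d | P \in unitmx]|)%N.
Proof.
move=> freeB0; have rB0 : \rank B0 = d by apply/eqP.
have -> : [set t in flat_params n d | mxflat t.1 t.2 == mxflat x0 B0]
        = setX (mxflat x0 B0) [set B : 'M[F]_(d, n) | (B == B0)%MS].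
  apply/setP => -[x B]; rewrite !inE /= eq_mxflat mem_mxflat.
  by case eqB: (B == B0)%MS; rewrite ?andbF // (eqmx_rank eqB) rB0 eqxx.
by rewrite cardsX card_mxflat rB0 card_eqmx_row_free.
Qed.

End AffineFlats.

Arguments flat_params : clear implicits.

Lemma F2_cases (k : 'F_2) : k = 0 \/ k = 1.
Proof. by case: k => -[|[|//]] lt_k2; [left|right]; apply: val_inj. Qed.

Lemma mxflat_col_mx d n (x v : 'rV['F_2]_n) (W : 'M['F_2]_(d, n)) :
  mxflat x (col_mx v W) = mxflat x W :|: mxflat (x + v) W.
Proof.
apply/setP => y; rewrite inE !mem_mxflat -addsmxE; apply/idP/orP.
  case/sub_addsmxP => -[a w] /= yx.
  rewrite opprD addrA yx [a]mx11_scalar mul_scalar_mx.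
  have [->|->] := F2_cases (a 0 0); rewrite ?scale0r ?scale1r ?add0r.
    by left; rewrite submxMl.
  by right; rewrite addrAC subrr add0r submxMl.
case=> [yxW|yxvW]; first exact: submx_trans yxW (addsmxSr v W).
have -> : y - x = (y - (x + v)) + v by rewrite opprD addrA subrK.
by apply: addmx_sub; [apply: submx_trans yxvW (addsmxSr v W) | apply: addsmxSl].
Qed.

Lemma odd_card_mxflat_col_mx d n (A : {set 'rV['F_2]_n}) (x v : 'rV['F_2]_n)
    (W : 'M['F_2]_(d, n)) : ~~ (v <= W)%MS ->
  odd #|A :&: mxflat x (col_mx v W)|
  = odd #|A :&: mxflat x W| (+) odd #|A :&: mxflat (x + v) W|.
Proof.
move/(disjoint_mxflat x)/disjoint_setI0 => disjW.
rewrite mxflat_col_mx setIUr cardsU setIACA setIid disjW setI0 cards0 subn0.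
by rewrite oddD.
Qed.

Section OddIntersections.

Variables (n d : nat) (A : {set 'rV['F_2]_n}).

Lemma sum_odd_mxflat_col_mx_le (W : 'M['F_2]_(d, n)) :
  (2 * \sum_(x : 'rV['F_2]_n) \sum_(v : 'rV['F_2]_n)
         (~~ (v <= W)%MS && odd #|A :&: mxflat x (col_mx v W)|)
   <= #|'rV['F_2]_n| ^ 2)%N.
Proof.
pose g y := odd #|A :&: mxflat y W|.
apply: leq_trans _ (sum_neq_pairs_le g); rewrite leq_mul2l /=; apply: leq_sum => x _.
rewrite [leqRHS](reindex_inj (addrI x)) /=; apply: leq_sum => v _.
have [//|vNW] /= := boolP (v <= W)%MS.
by rewrite odd_card_mxflat_col_mx // /g; case: odd; case: odd.
Qed.

Lemma odd_flat_params_le :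
  (2 * #|[set t in flat_params 'F_2 n d.+1 | odd #|A :&: mxflat t.1 t.2|]|
   <= #|[set W : 'M['F_2]_(d, n) | \rank W == d]| * #|'rV['F_2]_n| ^ 2)%N.
Proof.
have -> : #|[set t in flat_params 'F_2 n d.+1 | odd #|A :&: mxflat t.1 t.2|]|
   = (\sum_(x : 'rV['F_2]_n) \sum_(B : 'M['F_2]_(1 + d, n))
        ((\rank B == d.+1) && odd #|A :&: mxflat x B|))%N.
  by rewrite pair_bigA card_set_sumb; apply: eq_bigr => t _; rewrite !inE.
under eq_bigr => x _ do rewrite big_col_mx exchange_big.
rewrite exchange_big card_set_sumb big_distrr big_distrl /=; apply: leq_sum => W _.
under eq_bigr do under eq_bigr do rewrite rank_col_mx_rV.
have [rW|_] /= := boolP (\rank W == d); last by rewrite big1 // => x _; rewrite big1.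
by rewrite mul1n sum_odd_mxflat_col_mx_le.
Qed.

End OddIntersections.

Lemma prob_odd_flat_params n d (A : {set 'rV['F_2]_n}) :
  prob_odd n d A
  = #|[set t in flat_params 'F_2 n d | odd #|A :&: mxflat t.1 t.2|]|%:R
    / #|flat_params 'F_2 n d|%:R.
Proof.
have flatsE : flats n d = [set mxflat t.1 t.2 | t in flat_params 'F_2 n d].
  apply/setP => S; rewrite inE; apply/existsP/imsetP.
    by case=> x0 /existsP[B /andP[rB /eqP->]]; exists (x0, B); rewrite // !inE.
  case=> -[x0 B]; rewrite !inE /= => rB ->.
  by exists x0; apply/existsP; exists B; rewrite rB eqxx.
rewrite /prob_odd flatsE; apply: ratio_constant_fibers => -[x0 B0].
by rewrite !inE; apply: card_mxflat_fiber.
Qed.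

Lemma count_ratio_le (R : realFieldType) {O K M w : nat} : (w < M)%N ->
  (2 * O <= K * M ^ 2)%N ->
  O%:R / (M * (K * (M - w)))%:R <= M%:R / (2 * (M - w)%:R) :> R.
Proof.
move=> ltwM le2O; have [K0|K_gt0] := posnP K.
  move: le2O; rewrite K0 mul0n leqn0 muln_eq0 /= => /eqP->.
  by rewrite mul0r divr_ge0 // mulr_ge0.
have Mw_gt0 : (0 < M - w)%N by rewrite subn_gt0.
rewrite ler_pdivrMr ?ltr0n ?muln_gt0 ?K_gt0 ?Mw_gt0 ?andbT ?(leq_ltn_trans _ ltwM) //.
rewrite mulrAC ler_pdivlMr ?mulr_gt0 ?ltr0n //.
rewrite -!natrM ler_nat.
by have := leq_mul le2O (leqnn (M - w)); rewrite expnS expn1; nia.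
Qed.

Lemma mul_div_double_subr (R : realFieldType) (N w : R) : 1 < N -> 0 < w ->
  N * w / (2 * (N * w - w)) = 1 / 2 + 1 / (2 * (N - 1)).
Proof.
move=> N_gt1 w_gt0; rewrite -[X in N * w - X]mul1r -mulrBl.
by field; rewrite ?gt_eqF ?subr_gt0 // andbT.
Qed.

Theorem lemma4p1 (n d : nat) (A : {set 'rV['F_2]_n}) :
  (1 <= d)%N -> (d < n)%N ->
  prob_odd n d A <= 1 / 2 + 1 / (2 * (2 ^+ (n - d + 1) - 1)).
Proof.
case: d => [//|d] _ ltdn; have ltdn' : (d < n)%N := ltnW ltdn.
have card_F2 : #|'F_2| = 2%N by rewrite card_Fp.
have ltwM : (2 ^ d < 2 ^ n)%N by rewrite ltn_exp2l.
have le2O := odd_flat_params_le n d A; rewrite card_rV card_F2 in le2O.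
rewrite prob_odd_flat_params cardsX cardsT card_rV card_full_rank_succ card_F2.
apply: le_trans; first exact: (count_ratio_le rat ltwM le2O).
have -> : (n - d.+1 + 1 = n - d)%N by rewrite addn1 subnSK.
have -> : (2 ^ n = 2 ^ (n - d) * 2 ^ d)%N by rewrite -expnD subnK // ltnW.
rewrite natrB ?leq_pmull ?expn_gt0 // !natrM !natrX mul_div_double_subr //.
  by rewrite exprn_egt1 // -lt0n subn_gt0.
by rewrite exprn_gt0.
Qed.
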